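(* Let $t$, $k$ and $q$ be integers such that $q \ge 0$, $0 \le t < k$ and $t \equiv k \pmod 2$, and let $s \in [0,t+1]$ be the unique integer satisfying $s \equiv q + \frac{k-t-2}{2} \pmod{t+2}$. Then for any integer $n$ such that \[n \ge \max\left\{k,\ \frac{1}{2(t+2)}k^2 + \frac{q-s}{t+2}k - \frac{t}{2} + s\right\}\] and any function $f:[n]\to \{-1,1\}$ with $|f([n])| \le q$, there is a $k$-block $B \subseteq [n]$ with $|f(B)| \le t$.
   Context: $[n]=\{1,\dots,n\}$. For a function $f$ defined on a set $X$ with integer values and $Y\subseteq X$, $f(Y)=\sum_{y\in Y} f(y)$. A $k$-block is a set of $k$ consecutive integers. *)

From mathcomp Require Import all_boot all_order all_algebra.
Set Implicit Arguments. Unset Strict Implicit. Unset Printing Implicit Defensive.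
Import Order.TTheory GRing.Theory Num.Theory.

(* f(B) for the k-block B = {a+1, ..., a+k} *)
Definition block_sum (f : nat -> int) (a k : nat) : int :=
  (\sum_(a.+1 <= i < (a + k).+1) f i)%R.

(** If every k-block has |f(B)| > t then, since block sums are congruent to
    k = t mod 2 and move by at most 2 when the block is shifted by one, all of
    them have the same sign, say they are all >= t + 2.  Writing n = m k + r,
    tiling [n] by m blocks after an initial segment of length r gives
    f([n]) >= m (t+2) - r, and using the first block to bound that initial
    segment gives f([n]) >= (m+1)(t+2) - (k - r).  With k = t + 2 + 2h and
    q + h = j (t+2) + s, these two bounds and f([n]) <= q force
    n = m k + r <= j k + s + h, while the hypothesis on n says exactly
    n >= j k + s + h + 1. *)
From mathcomp Require Import all_boot all_order all_algebra.
From mathcomp Require Import zify ring.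
Set Implicit Arguments. Unset Strict Implicit. Unset Printing Implicit Defensive.
Import Order.TTheory GRing.Theory Num.Theory.
Local Open Scope ring_scope.

Definition pm1_on (n : nat) (f : nat -> int) :=
  forall i, (1 <= i <= n)%N -> f i = 1 \/ f i = -1.

Lemma pm1_onN n f : pm1_on n f -> pm1_on n (fun i => - f i).
Proof. by move=> f_pm1 i /f_pm1 [] ->; [right | left]. Qed.

Lemma block_sumN f a k : block_sum (fun i => - f i) a k = - block_sum f a k.
Proof. exact: sumrN. Qed.

Lemma block_sum0 f a : block_sum f a 0 = 0.
Proof. by rewrite /block_sum addn0 big_geq. Qed.

Lemma block_sumD f a k1 k2 :
  block_sum f a (k1 + k2) = block_sum f a k1 + block_sum f (a + k1) k2.
Proof.
by rewrite /block_sum addnA -(big_cat_nat _ (leq_addr _ _)) //= ltnS leq_addr.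
Qed.

Lemma block_sum_recr f a k : block_sum f a k.+1 = block_sum f a k + f (a + k).+1.
Proof. by rewrite -addn1 block_sumD /block_sum addn1 big_nat1. Qed.

Lemma block_sum_recl f a k : block_sum f a k.+1 = f a.+1 + block_sum f a.+1 k.
Proof. by rewrite -add1n block_sumD /block_sum !addn1 big_nat1. Qed.

Lemma block_sumS f a k :
  block_sum f a.+1 k = block_sum f a k - f a.+1 + f (a + k).+1.
Proof. by rewrite addrAC -block_sum_recr block_sum_recl addrC addKr. Qed.

Lemma block_sum_pm1 n f a k : pm1_on n f -> (a + k <= n)%N ->
  exists2 c : nat, (c <= k)%N & block_sum f a k = k%:Z - 2 * c%:Z.
Proof.
move=> f_pm1; elim: k => [|k IH] akn; first by exists 0%N; rewrite ?block_sum0.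
have [|c c_le bsE] := IH; first by lia.
have /f_pm1 [fE | fE] : (1 <= (a + k).+1 <= n)%N by lia.
- by exists c; [lia | rewrite block_sum_recr bsE fE; lia].
- by exists c.+1; [lia | rewrite block_sum_recr bsE fE; lia].
Qed.

Lemma exists_block_or_all_large f n k t : (k <= n)%N ->
  (exists a, (a + k <= n)%N /\ `|block_sum f a k| <= t%:Z) \/
  (forall a, (a + k <= n)%N -> t%:Z < `|block_sum f a k|).
Proof.
move=> k_le_n.
case: (boolP [exists a : 'I_(n - k).+1, `|block_sum f a k| <= t%:Z]).
  by case/existsP=> a small; left; exists a; split=> //; have := ltn_ord a; lia.
move/existsPn=> large; right=> a akn.
by have := large (Ordinal (_ : a < (n - k).+1)%N); rewrite ltNge; apply; lia.
Qed.

(* A shift changes a block sum by at most 2, and parity keeps it off the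
   interval (-(t+2), t+2). *)
Lemma large_blocks_ge n f k t : pm1_on n f -> t = k %[mod 2] ->
  (forall a, (a + k <= n)%N -> t%:Z < `|block_sum f a k|) ->
  0 < block_sum f 0 k -> forall a, (a + k <= n)%N -> (t + 2)%:Z <= block_sum f a k.
Proof.
move=> f_pm1 tk_parity blocks_large first_pos.
elim=> [|a IH] akn; have [c _ bsE] := block_sum_pm1 f_pm1 akn.
  by have := blocks_large _ akn; lia.
have := IH (ltnW akn); have := blocks_large _ akn; have := block_sumS f a k.
have /f_pm1 [-> | ->] : (1 <= a.+1 <= n)%N by lia.
all: have /f_pm1 [-> | ->] : (1 <= (a + k).+1 <= n)%N by lia.
all: lia.
Qed.

Lemma block_sum_mul_ge f n k (b : int) :
  (forall a, (a + k <= n)%N -> b <= block_sum f a k) ->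
  forall m a, (a + m * k <= n)%N -> m%:Z * b <= block_sum f a (m * k).
Proof.
move=> blocks_ge; elim=> [|m IH] a amk; first by rewrite mul0r mul0n block_sum0.
rewrite mulSn block_sumD intS mulrDl mul1r lerD ?blocks_ge ?IH //; lia.
Qed.

Lemma total_sum_ge n f k m r (b : int) : pm1_on n f ->
  n = (r + m * k)%N -> (r < k)%N -> (k <= n)%N ->
  (forall a, (a + k <= n)%N -> b <= block_sum f a k) ->
  m%:Z * b - r%:Z <= block_sum f 0 n /\ m.+1%:Z * b - (k - r)%:Z <= block_sum f 0 n.
Proof.
move=> f_pm1 n_eq r_lt_k k_le_n blocks_ge.
have tail_ge : m%:Z * b <= block_sum f r (m * k).
  by apply: (block_sum_mul_ge blocks_ge); rewrite -n_eq.
have /(block_sum_pm1 f_pm1) [c1 c1_le headE] : (0 + r <= n)%N by lia.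
have /(block_sum_pm1 f_pm1) [c2 _ restE] : (r + (k - r) <= n)%N by lia.
have first_split : block_sum f 0 k = block_sum f 0 r + block_sum f r (k - r).
  by rewrite -{1}(subnKC (ltnW r_lt_k)) block_sumD.
have := blocks_ge 0%N k_le_n.
have mulSb : m.+1%:Z * b = m%:Z * b + b by rewrite intS mulrDl mul1r addrC.
rewrite n_eq block_sumD add0n first_split headE restE mulSb.
move: tail_ge; move: (m%:Z * b) (block_sum f r (m * k)) => mb tail.
clear -c1_le r_lt_k; lia.
Qed.

Lemma tiling_lt_threshold t h q j s m r :
  (q + h = j * (t + 2) + s)%N -> (s < t + 2)%N -> (r < t + 2 + 2 * h)%N ->
  (m * (t + 2) <= q + r)%N -> (m * (t + 2) + r <= q + 2 * h)%N ->
  (r + m * (t + 2 + 2 * h) < j * (t + 2 + 2 * h) + s + h + 1)%N.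
Proof.
move=> q_eq s_lt r_lt tail_le head_le.
have m_le_j : (m <= j)%N.
  by rewrite -ltnS -(ltn_pmul2r (_ : 0 < t + 2)%N) ?addn2 //; lia.
case: (ltngtP m j) m_le_j => [m_lt_j _|//|m_eq_j _]; last by subst m; lia.
have : (m.+1 * (t + 2 + 2 * h) <= j * (t + 2 + 2 * h))%N by rewrite leq_mul2r m_lt_j orbT.
lia.
Qed.

Lemma threshold_eq (t k q s h j : nat) :
  k = (t + 2 + 2 * h)%N -> (q + h = j * (t + 2) + s)%N ->
  (k%:Q) ^+ 2 / (2 * (t%:Q + 2)) + (q%:Q - s%:Q) * k%:Q / (t%:Q + 2)
    - t%:Q / 2 + s%:Q = (j * k + s + h + 1)%N%:Q.
Proof.
move=> -> q_eq; rewrite -!pmulrn.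
have -> : q%:R = (j * (t + 2) + s)%N%:R - h%:R :> rat by rewrite -q_eq natrD addrK.
have t2_neq0 : (t%:R + 2 : rat) != 0 by rewrite gt_eqF // ltr_wpDl.
by rewrite !natrD !natrM; field.
Qed.

Theorem theorem2p2 (t k q s n : nat) (f : nat -> int) :
  (t < k)%N ->
  t = k %[mod 2] ->
  (s <= t.+1)%N ->
  s = (q + (k - t - 2) %/ 2)%N %[mod t.+2] ->
  (k <= n)%N ->
  ((k%:Q) ^+ 2 / (2 * (t%:Q + 2)) + (q%:Q - s%:Q) * k%:Q / (t%:Q + 2)
     - t%:Q / 2 + s%:Q <= n%:Q) ->
  (forall i, (1 <= i <= n)%N -> f i = 1 \/ f i = -1) ->
  `| \sum_(1 <= i < n.+1) f i | <= q%:Z ->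
  exists a : nat, (a + k <= n)%N /\ `| block_sum f a k | <= t%:Z.
Proof.
move=> t_lt_k tk_parity s_le s_mod k_le_n n_ge f_pm1 total_le.
set h := ((k - t - 2) %/ 2)%N in s_mod.
have k_eq : k = (t + 2 + 2 * h)%N by rewrite /h; lia.
rewrite modn_small // in s_mod.
set j := ((q + h) %/ t.+2)%N.
have q_eq : (q + h = j * (t + 2) + s)%N by rewrite s_mod /j addn2 -divn_eq.
rewrite (threshold_eq k_eq q_eq) ler_int in n_ge.
clearbody h j; clear s_mod.
have [//|all_large] := exists_block_or_all_large f t k_le_n.
exfalso; change (\sum_(1 <= i < n.+1) f i) with (block_sum f 0 n) in total_le.
wlog first_pos : f f_pm1 all_large total_le / 0 < block_sum f 0 k.
  move=> wlog_pos; case: (ltrP 0 (block_sum f 0 k)); first exact: wlog_pos.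
  move=> first_le0; apply: (wlog_pos _ (pm1_onN f_pm1)) => [a akn||];
    rewrite ?block_sumN ?normrN ?all_large //.
  by have := all_large 0%N k_le_n; lia.
have k_gt0 : (0 < k)%N by lia.
have n_eq : n = (n %% k + n %/ k * k)%N by rewrite addnC -divn_eq.
move: (n %/ k)%N (n %% k)%N (ltn_pmod n k_gt0) n_eq => m r r_lt_k n_eq.
have [tail_ge head_ge] := total_sum_ge f_pm1 n_eq r_lt_k k_le_n
  (large_blocks_ge f_pm1 tk_parity all_large first_pos).
have /negP[] : ~~ (r + m * k < j * k + s + h + 1)%N by rewrite -n_eq -leqNgt.
rewrite k_eq; apply: (tiling_lt_threshold q_eq); rewrite -?k_eq; lia.
Qed.
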